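(* Let $a<b$, let $F:(a,b)\to\mathcal{K}(\mathbb{R}^n)$ be metrically differentiable at $x_0\in(a,b)$. Then, as $x\to x_0$ with $x\in(a,b)$: (i) $\mathrm{haus}\big(L^MF|_{y_0}(x),\ \{y_0\}+(x-x_0)[x_0,x]^MF|_{y_0}\big)=o(|x-x_0|)$ uniformly in $y_0\in F(x_0)$, i.e. $\sup_{y_0\in F(x_0)}\mathrm{haus}\big(L^MF|_{y_0}(x),\{y_0\}+(x-x_0)[x_0,x]^MF|_{y_0}\big)/|x-x_0|\to0$; (ii) $\mathrm{haus}(F(x),L^MF(x))=o(|x-x_0|)$.
   Context: $\mathcal{K}(\mathbb{R}^n)$ is the set of nonempty compact subsets of $\mathbb{R}^n$, $|\cdot|$ the Euclidean norm, $\mathrm{dist}(x,A)=\min_{a\in A}|x-a|$, $\mathrm{haus}$ the Hausdorff distance. For $c\in\mathbb{R}^n$, $\lambda\in\mathbb{R}$ and a set $A$: $\{c\}+\lambda A=\{c+\lambda a: a\in A\}$. For $a\in\mathbb{R}^n$, $B\in\mathcal{K}(\mathbb{R}^n)$, $\Pi_B(a)=\{b\in B:|a-b|=\mathrm{dist}(a,B)\}$; for $A,B\in\mathcal{K}(\mathbb{R}^n)$, $\Pi(A,B)=\{(a,b)\in A\times B: a\in\Pi_A(b)\text{ or }b\in\Pi_B(a)\}$ (metric pairs). For $x\ne x_0$ and $y_0\in F(x_0)$: $[x_0,x]^MF|_{y_0}=\{\frac{y-y_0}{x-x_0}:(y_0,y)\in\Pi(F(x_0),F(x))\}$. $F$ is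 metrically differentiable from the right at $x_0$ if for every $y\in F(x_0)$ there is a nonempty set $D^M_+F(x_0)|_y$ such that $\sup_{y\in F(x_0)}\mathrm{haus}(D^M_+F(x_0)|_y,[x_0,x]^MF|_y)\to0$ as $x\to x_0^+$; from the left analogously with $D^M_-F(x_0)|_y$ and $x\to x_0^-$; metrically differentiable at $x_0$ means both. The local metric linear approximant anchored at $y_0\in F(x_0)$ is $L^MF|_{y_0}(x)=\{y_0\}+(x-x_0)D^M_+F(x_0)|_{y_0}$ for $x\ge x_0$ and $L^MF|_{y_0}(x)=\{y_0\}+(x-x_0)D^M_-F(x_0)|_{y_0}$ for $x<x_0$; the local metric linear approximant is $L^MF(x)=\bigcup_{y\in F(x_0)}L^MF|_y(x)$. *)

(* R^n is modelled as row vectors 'rV[R]_n with the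
   Euclidean norm defined explicitly (the library norm on matrices is the max norm). *)
From HB Require Import structures.
From mathcomp Require Import all_boot all_order all_algebra.
From mathcomp Require Import all_classical all_reals all_analysis.
Set Implicit Arguments. Unset Strict Implicit. Unset Printing Implicit Defensive.
Import Order.TTheory GRing.Theory Num.Theory.
Import numFieldNormedType.Exports numFieldTopology.Exports.
Local Open Scope classical_set_scope.
Local Open Scope ring_scope.

Section Defs.
Context {R : realType} {n : nat}.
Notation V := 'rV[R]_n.

Definition enorm (v : V) : R := Num.sqrt (\sum_(i < n) (v ord0 i) ^+ 2).

Definition edist (x : V) (A : set V) : \bar R :=
  ereal_inf [set (enorm (x - a))%:E | a in A].

Definition haus (A B : set V) : \bar R :=
  maxe (ereal_sup [set edist a B | a in A]) (ereal_sup [set edist b A | b in B]).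

Definition proj (B : set V) (a : V) : set V :=
  [set b | B b /\ (enorm (a - b))%:E = edist a B].

Definition mpairs (A B : set V) : set (V * V) :=
  [set p | A p.1 /\ B p.2 /\ (proj A p.2 p.1 \/ proj B p.1 p.2)].

Definition trans_scale (c : V) (l : R) (A : set V) : set V :=
  [set c + l *: a | a in A].

Definition mquot (F : R -> set V) (x0 x : R) (y0 : V) : set V :=
  [set (x - x0)^-1 *: (y - y0) | y in [set y | mpairs (F x0) (F x) (y0, y)]].

Definition mdiff_right (F : R -> set V) (x0 : R) (D : V -> set V) : Prop :=
  (forall y, F x0 y -> D y !=set0) /\
  forall eps : R, 0 < eps -> exists2 delta : R, 0 < delta &
    forall x, x0 < x < x0 + delta ->
      (ereal_sup [set haus (D y) (mquot F x0 x y) | y in F x0] <= eps%:E)%E.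

Definition mdiff_left (F : R -> set V) (x0 : R) (D : V -> set V) : Prop :=
  (forall y, F x0 y -> D y !=set0) /\
  forall eps : R, 0 < eps -> exists2 delta : R, 0 < delta &
    forall x, x0 - delta < x < x0 ->
      (ereal_sup [set haus (D y) (mquot F x0 x y) | y in F x0] <= eps%:E)%E.

Definition LMa (x0 : R) (Dp Dm : V -> set V) (y0 : V) (x : R) : set V :=
  if x0 <= x then trans_scale y0 (x - x0) (Dp y0)
  else trans_scale y0 (x - x0) (Dm y0).

Definition LM (F : R -> set V) (x0 : R) (Dp Dm : V -> set V) (x : R) : set V :=
  \bigcup_(y in F x0) LMa x0 Dp Dm y x.

End Defs.

(* Metric differentiability says that the difference-quotient sets
   [x0,x]^M F|_{y0} are uniformly Hausdorff-close to D^M_{+/-} F(x0)|_{y0}.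
   The map A |-> {y0} + (x - x0) A multiplies Hausdorff distances by
   |x - x0|, which gives (i).  For (ii), F(x) is the union over y0 in F(x0)
   of {y0} + (x - x0) [x0,x]^M F|_{y0}, L^M F(x) is the union of the
   L^M F|_{y0}(x), and the Hausdorff distance of two unions is bounded by
   the supremum of the distances between corresponding pieces. *)

From Pilot Require Import Defs.
From HB Require Import structures.
From mathcomp Require Import all_boot all_order all_algebra.
From mathcomp Require Import all_classical all_reals all_analysis.
From mathcomp Require Import lra.
Import Order.TTheory GRing.Theory Num.Theory.
Import numFieldNormedType.Exports numFieldTopology.Exports.
Local Open Scope classical_set_scope.
Local Open Scope ring_scope.

Set Implicit Arguments. Unset Strict Implicit.

Section Hausdorff.
Context {R : realType} {n : nat}.
Notation V := 'rV[R]_n.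
Implicit Types (A B : set V) (r : R).

Lemma enormZ (t : R) (v : V) : enorm (t *: v) = `|t| * enorm v.
Proof.
rewrite /enorm; under eq_bigr do rewrite mxE exprMn.
by rewrite -mulr_sumr sqrtrM ?sqr_ge0 // sqrtr_sqr.
Qed.

Lemma enorm_continuous : continuous (@enorm R n).
Proof.
move=> v; apply: (continuous_comp _ (@sqrt_continuous R _)).
apply: (@continuous_big _ _ +%R 0 xpredT add_continuous _ (index_enum _)
  (fun i (w : V) => w ord0 i ^+ 2)) => i _.
have coord_i : continuous (fun w : V => w ord0 i) by move=> w; exact: coord_continuous.
have -> : (fun w : V => w ord0 i ^+ 2) = (fun w => w ord0 i * w ord0 i).
  by apply/funext => w; rewrite expr2.
by move=> w; apply: cvgM; [exact: nbhs_filter | exact: coord_i | exact: coord_i].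
Qed.

Lemma proj_neq0 A (y : V) : A !=set0 -> compact A -> Defs.proj A y !=set0.
Proof.
move=> A0 cA.
have dist_y_cont : continuous (fun z : V => enorm (y - z)).
  move=> z; apply: (@continuous_comp _ _ _ (fun w : V => y - w) (@enorm R n)).
    apply: cvgB; first exact: nbhs_filter; last exact: cvg_id.
    by apply: cvg_cst; exact: nbhs_filter.
  exact: enorm_continuous.
have [c /[!inE] Ac cmin] :=
  compact_EVT_min A0 cA (continuous_subspaceT dist_y_cont).
exists c; split => //; apply/eqP; rewrite eq_le; apply/andP; split.
- by apply/ereal_infP => _ [z Az <-]; rewrite lee_fin cmin ?inE.
- by apply: ereal_inf_lbound; exists c.
Qed.

Definition approx_by A B r :=
  forall a, A a -> forall d, 0 < d -> exists2 b, B b & enorm (a - b) < r + d.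

Lemma sup_edist_leP A B r :
  (ereal_sup [set Defs.edist a B | a in A] <= r%:E)%E <-> approx_by A B r.
Proof.
split => [supAB a Aa d d0 | ABr].
- have aBr : (Defs.edist a B <= r%:E)%E.
    by apply: le_trans supAB; apply: ereal_sup_ubound; exists a.
  have : (Defs.edist a B < (r + d)%:E)%E.
    by apply: le_lt_trans aBr _; rewrite lte_fin ltrDl.
  by move=> /ereal_inf_ltP [_ [b Bb <-]]; rewrite lte_fin; exists b.
- apply/ereal_supP => _ [a Aa <-]; apply/lee_addgt0Pr => d d0.
  have [b Bb abd] := ABr a Aa d d0.
  apply: (@le_trans _ _ (enorm (a - b))%:E); first by apply: ereal_inf_lbound; exists b.
  by rewrite -EFinD lee_fin ltW.
Qed.

Lemma haus_leP A B r :
  (haus A B <= r%:E)%E <-> approx_by A B r /\ approx_by B A r.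
Proof. by rewrite /haus ge_max -!sup_edist_leP; split => [/andP | [-> ->]]. Qed.

Lemma hausC A B : haus A B = haus B A.
Proof. by rewrite /haus maxC. Qed.

Lemma approx_by_bigcup (I : Type) (D : set I) (A B : I -> set V) r :
  (forall i, D i -> approx_by (A i) (B i) r) ->
  approx_by (\bigcup_(i in D) A i) (\bigcup_(i in D) B i) r.
Proof.
move=> ABr a [i Di Aia] d d0.
by have [b Bib abd] := ABr i Di a Aia d d0; exists b => //; exists i.
Qed.

Lemma haus_bigcup_le (I : Type) (D : set I) (A B : I -> set V) r :
  (forall i, D i -> (haus (A i) (B i) <= r%:E)%E) ->
  (haus (\bigcup_(i in D) A i) (\bigcup_(i in D) B i) <= r%:E)%E.
Proof.
move=> ABr; apply/haus_leP; split; apply: approx_by_bigcup => i Di;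
  by have /haus_leP[] := ABr i Di.
Qed.

Lemma approx_by_trans_scale A B (c : V) (t : R) r :
  approx_by A B r -> approx_by (trans_scale c t A) (trans_scale c t B) (r * `|t|).
Proof.
move=> ABr _ [a Aa <-] d d0.
have d'0 : 0 < d / (`|t| + 1) by rewrite divr_gt0 // ltr_wpDl.
have [b Bb abd] := ABr a Aa _ d'0.
exists (c + t *: b); first by exists b.
rewrite opprD addrACA subrr add0r -scalerBr enormZ.
have tdd : `|t| * (d / (`|t| + 1)) < d.
  by rewrite mulrCA gtr_pMr // ltr_pdivrMr ?mul1r ?ltrDl // ltr_wpDl.
have := ler_wpM2l (normr_ge0 t) (ltW abd); lra.
Qed.

Lemma haus_trans_scale_le A B (c : V) (t : R) r :
  (haus A B <= r%:E)%E ->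
  (haus (trans_scale c t A) (trans_scale c t B) <= (r * `|t|)%:E)%E.
Proof.
by move=> /haus_leP[ABr BAr]; apply/haus_leP; split; apply: approx_by_trans_scale.
Qed.

End Hausdorff.

Section MetricDerivative.
Context {R : realType} {n : nat}.
Notation V := 'rV[R]_n.
Variables (F : R -> set V) (x0 : R) (Dp Dm : V -> set V).
Hypotheses (F'r : mdiff_right F x0 Dp) (F'l : mdiff_left F x0 Dm).

(* [F x] is covered because each of its points forms a metric pair with any
   of its projections onto [F x0]. *)
Lemma bigcup_mquot x : x != x0 -> F x0 !=set0 -> compact (F x0) ->
  F x = \bigcup_(y0 in F x0) trans_scale y0 (x - x0) (mquot F x0 x y0).
Proof.
move=> xx0 F0 cF0; have t0 : x - x0 != 0 by rewrite subr_eq0.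
have quotK (y0 y : V) : y0 + (x - x0) *: ((x - x0)^-1 *: (y - y0)) = y.
  by rewrite scalerA mulfV // scale1r addrC subrK.
apply/seteqP; split => [y Fxy | _ [y0 _ [_ [y [_ [Fxy _]] <-] <-]]].
- have [y0 [Fy0 y0y]] := proj_neq0 y F0 cF0.
  exists y0 => //; exists ((x - x0)^-1 *: (y - y0)); last exact: quotK.
  by exists y => //; split => //; split => //; left.
- by rewrite quotK.
Qed.

Lemma LMaE y0 x :
  LMa x0 Dp Dm y0 x = trans_scale y0 (x - x0) ((if x0 <= x then Dp else Dm) y0).
Proof. by rewrite /LMa; case: ifP. Qed.

Lemma mdiff_haus_le (eps : R) : 0 < eps -> exists2 delta : R, 0 < delta &
    forall x, 0 < `|x - x0| < delta -> forall y0, F x0 y0 ->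
      (haus ((if (x0 <= x)%R then Dp else Dm) y0) (mquot F x0 x y0) <= eps%:E)%E.
Proof.
move=> e0; have [d1 d1p h1] := F'r.2 eps e0; have [d2 d2p h2] := F'l.2 eps e0.
exists (Num.min d1 d2) => [|x]; first by rewrite lt_min d1p d2p.
rewrite normr_gt0 subr_eq0 lt_min ltr_norml => /andP[xx0 /andP[]].
rewrite ltr_norml => /andP[_ xd1] /andP[xd2 _] y0 Fy0.
have [x0x | xx0'] := leP x0 x.
- have : x0 < x < x0 + d1 by rewrite lt_neqAle eq_sym xx0 x0x /=; lra.
  by move=> /h1 /ereal_supP; apply; exists y0.
- have : x0 - d2 < x < x0 by rewrite xx0' andbT; lra.
  by move=> /h2 /ereal_supP; apply; exists y0.
Qed.

Lemma LMa_haus_le (eps : R) : 0 < eps -> exists2 delta : R, 0 < delta &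
  forall x, 0 < `|x - x0| < delta -> forall y0, F x0 y0 ->
    (haus (LMa x0 Dp Dm y0 x) (trans_scale y0 (x - x0) (mquot F x0 x y0))
      <= (eps * `|x - x0|)%:E)%E.
Proof.
move=> e0; have [delta d0 hd] := mdiff_haus_le e0.
by exists delta => // x xd y0 Fy0; rewrite LMaE; apply/haus_trans_scale_le/hd.
Qed.

End MetricDerivative.

Theorem mainTheorem2 (R : realType) (n : nat) (a b x0 : R)
    (F : R -> set 'rV[R]_n) (Dp Dm : 'rV[R]_n -> set 'rV[R]_n) :
  a < b ->
  (forall x, a < x < b -> F x !=set0 /\ compact (F x)) ->
  a < x0 < b ->
  mdiff_right F x0 Dp -> mdiff_left F x0 Dm ->
  (forall eps : R, 0 < eps -> exists2 delta : R, 0 < delta &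
     forall x, a < x < b -> 0 < `|x - x0| < delta ->
       (ereal_sup [set haus (LMa x0 Dp Dm y0 x)
                          (trans_scale y0 (x - x0) (mquot F x0 x y0)) | y0 in F x0]
         <= (eps * `|x - x0|)%:E)%E)
  /\
  (forall eps : R, 0 < eps -> exists2 delta : R, 0 < delta &
     forall x, a < x < b -> 0 < `|x - x0| < delta ->
       (haus (F x) (LM F x0 Dp Dm x) <= (eps * `|x - x0|)%:E)%E).
Proof.
move=> _ hF ax0b F'r F'l; have [F0 cF0] := hF x0 ax0b.
split => eps e0; have [delta d0 hd] := LMa_haus_le F'r F'l e0;
  exists delta => // x _ xd.
- by apply/ereal_supP => _ [y0 Fy0 <-]; exact: hd.
- have xx0 : x != x0 by rewrite -subr_eq0 -normr_gt0; case/andP: xd.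
  rewrite (bigcup_mquot xx0 F0 cF0) hausC.
  by apply: haus_bigcup_le => y0 Fy0; exact: hd.
Qed.
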